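(* Let $a,b>0$, $D=[0,a]\times[0,b]$, and let $f:D\to\mathbb{R}$ be a $C^3$ function. Let $p\in\operatorname{int}D$ be a saddle point of $f$, i.e. a stationary point at which the determinant of the Hessian of $f$ is negative. Then there exist a neighborhood $U$ of $p$ and a number $r>0$ such that for every sufficiently large $n$, every grid vertex $p_{i,j}$ of $D_n$ lying in $U$ is neither minimal nor maximal within its grid circle $C_r(p_{i,j})$.
   Context: For $n\ge1$, $D_n$ denotes the division of $D$ into $n\times n$ congruent rectangles; its grid vertices are the points $p_{i,j}=\left(\frac{i}{n}a,\frac{j}{n}b\right)$, $0\le i,j\le n$. The grid circle of centre $p_{i,j}$ and radius $r$ is $C_r(p_{i,j})=\{p_{l,m}: 0\le l,m\le n,\ \max\{|l-i|,|m-j|\}\le r\}$. A grid vertex $p_{i,j}$ is minimal (resp. maximal) within $C_r(p_{i,j})$ if $f(p_{i,j})\le f(q)$ (resp. $f(p_{i,j})\ge f(q)$) for every $q\in C_r(p_{i,j})$. *)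

From Stdlib Require Import Reals Lra.
Open Scope R_scope.

Definition cont2_at (g : R -> R -> R) (x y : R) : Prop :=
  forall eps, 0 < eps -> exists d, 0 < d /\
    forall u v, Rabs (u - x) < d -> Rabs (v - y) < d ->
      Rabs (g u v - g x y) < eps.

(* C^k on a set S (intended: an open set) : all partial derivatives of order
   <= k exist on S and are jointly continuous on S. *)
Fixpoint Ck (k : nat) (S : R -> R -> Prop) (f : R -> R -> R) : Prop :=
  match k with
  | O => forall x y, S x y -> cont2_at f x y
  | S k' => (forall x y, S x y -> cont2_at f x y) /\
      exists fx fy : R -> R -> R,
        (forall x y, S x y -> derivable_pt_lim (fun t => f t y) x (fx x y)) /\
        (forall x y, S x y -> derivable_pt_lim (fun t => f x t) y (fy x y)) /\
        Ck k' S fx /\ Ck k' S fy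
  end.

Definition interiorD (a b : R) (x y : R) : Prop := 0 < x < a /\ 0 < y < b.

Definition gridx (a : R) (n i : nat) : R := INR i / INR n * a.
Definition gridy (b : R) (n j : nat) : R := INR j / INR n * b.

Definition in_grid_circle (n : nat) (r : R) (i j l m : nat) : Prop :=
  (l <= n)%nat /\ (m <= n)%nat /\
  Rmax (Rabs (INR l - INR i)) (Rabs (INR m - INR j)) <= r.

Definition grid_minimal (a b : R) (f : R -> R -> R) (n : nat) (r : R) (i j : nat) : Prop :=
  forall l m, in_grid_circle n r i j l m ->
    f (gridx a n i) (gridy b n j) <= f (gridx a n l) (gridy b n m).

Definition grid_maximal (a b : R) (f : R -> R -> R) (n : nat) (r : R) (i j : nat) : Prop :=
  forall l m, in_grid_circle n r i j l m ->
    f (gridx a n i) (gridy b n j) >= f (gridx a n l) (gridy b n m).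

Definition nbhd (U : R -> R -> Prop) (p1 p2 : R) : Prop :=
  exists d, 0 < d /\ forall x y, Rabs (x - p1) < d -> Rabs (y - p2) < d -> U x y.

(* Let A, B, C, D be the second partials of f at the saddle p.  In grid units, a step
   (k, l) of the grid D_n is the displacement (k a / n, l b / n), and by Taylor's theorem
   with the mean value form of the remainder the symmetric second difference
   f(p_{i+k,j+l}) + f(p_{i-k,j-l}) - 2 f(p_{i,j}) equals Q(k, l) / n^2 up to an error
   3 eps (k^2 a^2 + l^2 b^2) / n^2, where eps bounds the oscillation of the second
   partials near p and Q(k, l) = A a^2 k^2 + (B + C) a b k l + D b^2 l^2.  Since
   AD - BC < 0, the form Q is indefinite, and by homogeneity and rounding it takes a
   positive value at some lattice point (k1, l1) and a negative one at some (k2, l2).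
   For n large and p_{i,j} close to p, the second difference along (k1, l1) is then
   positive, so p_{i,j} is not maximal in a grid circle containing p_{i+-k1, j+-l1};
   symmetrically it is not minimal. *)

From Stdlib Require Import Reals Lra Lia ZArith.
Open Scope R_scope.

Lemma Rabs_le_inv x r : Rabs x <= r -> - r <= x <= r.
Proof.
  intros H; pose proof (Rle_abs x); pose proof (Rle_abs (- x)).
  rewrite Rabs_Ropp in *; lra.
Qed.

Lemma derivable_pt_lim_affine c d w : derivable_pt_lim (fun z => c + d * z) w d.
Proof.
  pose proof (derivable_pt_lim_plus _ _ w _ _ (derivable_pt_lim_const c w)
    (derivable_pt_lim_scal id d w 1 (derivable_pt_lim_id w))) as H.
  rewrite Rplus_0_l, Rmult_1_r in H.
  exact (derivable_pt_lim_ext _ _ w d (fun z => eq_refl) H).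
Qed.

Lemma derivable_pt_lim_linear A w : derivable_pt_lim (fun z => A * z) w A.
Proof.
  pose proof (derivable_pt_lim_scal id A w 1 (derivable_pt_lim_id w)) as H.
  rewrite Rmult_1_r in H; exact H.
Qed.

Lemma derivable_pt_lim_comp_affine (phi : R -> R) phi' c d w :
  derivable_pt_lim phi (c + d * w) phi' ->
  derivable_pt_lim (fun z => phi (c + d * z)) w (d * phi').
Proof.
  intros H; rewrite Rmult_comm.
  exact (derivable_pt_lim_comp _ phi w d phi' (derivable_pt_lim_affine c d w) H).
Qed.

Lemma derivable_pt_lim_scal_sqr A w : derivable_pt_lim (fun z => A * z ^ 2) w (2 * A * w).
Proof.
  pose proof (derivable_pt_lim_scal Rsqr A w _ (derivable_pt_lim_Rsqr w)) as H.
  replace (2 * A * w) with (A * (2 * w)) by ring.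
  refine (derivable_pt_lim_ext _ _ w _ _ H).
  intros z; unfold mult_real_fct, Rsqr; ring.
Qed.

Lemma Rabs_sub_le_of_deriv_bound (h h' : R -> R) m rho K c e :
  (forall u, Rabs (u - m) <= rho -> derivable_pt_lim h u (h' u)) ->
  (forall u, Rabs (u - m) <= rho -> Rabs (h' u) <= K) ->
  Rabs (c - m) <= rho -> Rabs (e - m) <= rho ->
  Rabs (h e - h c) <= K * Rabs (e - c).
Proof.
  intros Hd Hb Hc He.
  assert (Hbetween : forall z, Rmin c e <= z <= Rmax c e -> Rabs (z - m) <= rho).
  { intros z Hz; apply Rabs_le.
    apply Rabs_le_inv in Hc; apply Rabs_le_inv in He.
    revert Hz; unfold Rmin, Rmax; destruct (Rle_dec c e); lra. }
  destruct (MVT_abs h h' c e (fun z Hz => Hd z (Hbetween z Hz))) as [z [-> Hz]].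
  apply Rmult_le_compat_r; [apply Rabs_pos | apply Hb, Hbetween, Hz].
Qed.

Lemma sym_second_diff_bound (phi phi' phi'' : R -> R) x s A eps :
  (forall u, Rabs (u - x) <= Rabs s -> derivable_pt_lim phi u (phi' u) /\
     derivable_pt_lim phi' u (phi'' u) /\ Rabs (phi'' u - A) <= eps) ->
  Rabs (phi (x + s) + phi (x - s) - 2 * phi x - A * s ^ 2) <= 2 * eps * s ^ 2.
Proof.
  intros H.
  assert (Hx : Rabs (x - x) <= Rabs s) by (rewrite Rminus_diag, Rabs_R0; apply Rabs_pos).
  assert (Heps : 0 <= eps).
  { destruct (H x Hx) as [_ [_ Hb]]; pose proof (Rabs_pos (phi'' x - A)); lra. }
  assert (Hpm : forall w, Rabs w <= Rabs s ->
            Rabs (x + w - x) <= Rabs s /\ Rabs (x - w - x) <= Rabs s).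
  { intros w Hw; replace (x + w - x) with w by ring.
    replace (x - w - x) with (- w) by ring; rewrite Rabs_Ropp; lra. }
  assert (Hslope : forall w, Rabs w <= Rabs s ->
            Rabs (phi' (x + w) - phi' (x - w) - 2 * A * w) <= 2 * eps * Rabs s).
  { intros w Hw; destruct (Hpm w Hw) as [Hp Hm].
    replace (phi' (x + w) - phi' (x - w) - 2 * A * w)
      with ((phi' (x + w) - A * (x + w)) - (phi' (x - w) - A * (x - w))) by ring.
    eapply Rle_trans.
    - apply (Rabs_sub_le_of_deriv_bound (fun u => phi' u - A * u) (fun u => phi'' u - A)
               x (Rabs s) eps); [| intros u Hu; apply (H u Hu) | exact Hm | exact Hp].
      intros u Hu.
      exact (derivable_pt_lim_minus _ _ _ _ _ (proj1 (proj2 (H u Hu)))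
               (derivable_pt_lim_linear A u)).
    - replace (x + w - (x - w)) with (2 * w) by ring.
      rewrite Rabs_mult, (Rabs_right 2) by lra.
      nra. }
  assert (Hh : forall w, Rabs (w - 0) <= Rabs s -> derivable_pt_lim
            (fun z => phi (x + z) + phi (x - z) - A * z ^ 2) w
            (phi' (x + w) - phi' (x - w) - 2 * A * w)).
  { intros w Hw; rewrite Rminus_0_r in Hw; destruct (Hpm w Hw) as [Hp Hm].
    pose proof (derivable_pt_lim_comp_affine phi _ x 1 w
      ltac:(rewrite Rmult_1_l; exact (proj1 (H _ Hp)))) as D1.
    pose proof (derivable_pt_lim_comp_affine phi _ x (-1) w
      ltac:(replace (x + -1 * w) with (x - w) by ring; exact (proj1 (H _ Hm)))) as D2.
    pose proof (derivable_pt_lim_minus _ _ _ _ _ (derivable_pt_lim_plus _ _ _ _ _ D1 D2)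
      (derivable_pt_lim_scal_sqr A w)) as D.
    replace (phi' (x + w) - phi' (x - w) - 2 * A * w)
      with (1 * phi' (x + w) + -1 * phi' (x - w) - 2 * A * w) by ring.
    refine (derivable_pt_lim_ext _ _ w _ _ D).
    intros z; unfold minus_fct, plus_fct.
    replace (x + 1 * z) with (x + z) by ring; replace (x + -1 * z) with (x - z) by ring.
    reflexivity. }
  pose proof (Rabs_sub_le_of_deriv_bound _ _ 0 (Rabs s) (2 * eps * Rabs s) 0 s Hh
    (fun w Hw => Hslope w ltac:(rewrite Rminus_0_r in Hw; exact Hw))) as Hb.
  cbv beta in Hb; rewrite !Rminus_0_r, Rplus_0_r, Rabs_R0 in Hb.
  replace (phi (x + s) + phi (x - s) - 2 * phi x - A * s ^ 2)
    with (phi (x + s) + phi (x - s) - A * s ^ 2 - (phi x + phi x - A * 0 ^ 2)) by ring.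
  replace (2 * eps * s ^ 2) with (2 * eps * Rabs s * Rabs s) by (rewrite <- pow2_abs; ring).
  apply Hb; [apply Rabs_pos | lra].
Qed.

Lemma mixed_diff_bound (f fx fxy : R -> R -> R) x y s t B eps :
  (forall u v, Rabs (u - x) <= Rabs s -> Rabs (v - y) <= Rabs t ->
    derivable_pt_lim (fun z => f z v) u (fx u v) /\
    derivable_pt_lim (fun z => fx u z) v (fxy u v) /\ Rabs (fxy u v - B) <= eps) ->
  Rabs (f (x + s) (y + t) - f (x + s) y - f x (y + t) + f x y - B * s * t)
    <= eps * Rabs s * Rabs t.
Proof.
  intros H.
  assert (Hx0 : Rabs (x - x) <= Rabs s) by (rewrite Rminus_diag, Rabs_R0; apply Rabs_pos).
  assert (Hxs : Rabs (x + s - x) <= Rabs s) by (replace (x + s - x) with s by ring; lra).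
  assert (Hy0 : Rabs (y - y) <= Rabs t) by (rewrite Rminus_diag, Rabs_R0; apply Rabs_pos).
  assert (Hyt : Rabs (y + t - y) <= Rabs t) by (replace (y + t - y) with t by ring; lra).
  assert (Hslope : forall u, Rabs (u - x) <= Rabs s ->
            Rabs (fx u (y + t) - fx u y - B * t) <= eps * Rabs t).
  { intros u Hu.
    replace (fx u (y + t) - fx u y - B * t)
      with ((fx u (y + t) - B * (y + t)) - (fx u y - B * y)) by ring.
    replace (eps * Rabs t) with (eps * Rabs (y + t - y)) by (do 3 f_equal; ring).
    apply (Rabs_sub_le_of_deriv_bound (fun v => fx u v - B * v) (fun v => fxy u v - B)
             y (Rabs t)); auto.
    - intros v Hv.
      exact (derivable_pt_lim_minus _ _ _ _ _ (proj1 (proj2 (H u v Hu Hv)))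
               (derivable_pt_lim_linear B v)).
    - intros v Hv; apply (H u v Hu Hv). }
  replace (f (x + s) (y + t) - f (x + s) y - f x (y + t) + f x y - B * s * t)
    with ((f (x + s) (y + t) - f (x + s) y - B * t * (x + s))
          - (f x (y + t) - f x y - B * t * x)) by ring.
  replace (eps * Rabs s * Rabs t) with (eps * Rabs t * Rabs (x + s - x))
    by (replace (x + s - x) with s by ring; ring).
  apply (Rabs_sub_le_of_deriv_bound (fun u => f u (y + t) - f u y - B * t * u)
           (fun u => fx u (y + t) - fx u y - B * t) x (Rabs s)); auto.
  intros u Hu.
  exact (derivable_pt_lim_minus _ _ _ _ _
           (derivable_pt_lim_minus _ _ _ _ _ (proj1 (H u (y + t) Hu Hyt)) (proj1 (H u y Hu Hy0)))
           (derivable_pt_lim_linear (B * t) u)).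
Qed.

Section SecondDifference.

Variables (S : R -> R -> Prop) (f fx fy fxx fxy fyx fyy : R -> R -> R).
Hypothesis Dx : forall x y, S x y -> derivable_pt_lim (fun t => f t y) x (fx x y).
Hypothesis Dy : forall x y, S x y -> derivable_pt_lim (fun t => f x t) y (fy x y).
Hypothesis Dxx : forall x y, S x y -> derivable_pt_lim (fun t => fx t y) x (fxx x y).
Hypothesis Dxy : forall x y, S x y -> derivable_pt_lim (fun t => fx x t) y (fxy x y).
Hypothesis Dyx : forall x y, S x y -> derivable_pt_lim (fun t => fy t y) x (fyx x y).
Hypothesis Dyy : forall x y, S x y -> derivable_pt_lim (fun t => fy x t) y (fyy x y).

Definition hessian_near (A B C D eps u v : R) : Prop :=
  S u v /\ Rabs (fxx u v - A) <= eps /\ Rabs (fxy u v - B) <= eps /\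
  Rabs (fyx u v - C) <= eps /\ Rabs (fyy u v - D) <= eps.

Lemma second_diff_bound A B C D eps x y s t :
  (forall u v, Rabs (u - x) <= Rabs s -> Rabs (v - y) <= Rabs t ->
     hessian_near A B C D eps u v) ->
  Rabs (f (x + s) (y + t) + f (x - s) (y - t) - 2 * f x y
        - (A * s ^ 2 + (B + C) * s * t + D * t ^ 2)) <= 3 * eps * (s ^ 2 + t ^ 2).
Proof.
  intros H.
  assert (Hx0 : Rabs (x - x) <= Rabs s) by (rewrite Rminus_diag, Rabs_R0; apply Rabs_pos).
  assert (Hy0 : Rabs (y - y) <= Rabs t) by (rewrite Rminus_diag, Rabs_R0; apply Rabs_pos).
  assert (Sx : Rabs (f (x + s) y + f (x - s) y - 2 * f x y - A * s ^ 2) <= 2 * eps * s ^ 2).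
  { apply (sym_second_diff_bound (fun z => f z y) (fun z => fx z y) (fun z => fxx z y)).
    intros u Hu; destruct (H u y Hu Hy0) as [HS [HA _]]; auto. }
  assert (Sy : Rabs (f x (y + t) + f x (y - t) - 2 * f x y - D * t ^ 2) <= 2 * eps * t ^ 2).
  { apply (sym_second_diff_bound (fun z => f x z) (fun z => fy x z) (fun z => fyy x z)).
    intros v Hv; destruct (H x v Hx0 Hv) as [HS [_ [_ [_ HD]]]]; auto. }
  pose proof (mixed_diff_bound f fx fxy x y s t B eps) as Mxy.
  specialize (Mxy ltac:(intros u v Hu Hv; destruct (H u v Hu Hv) as [HS [_ [HB _]]]; auto)).
  (* taking the second mixed difference in the other order of the variables brings in fyx *)
  pose proof (mixed_diff_bound (fun v u => f u v) (fun v u => fy u v) (fun v u => fyx u v)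
    y x (- t) (- s) C eps) as Myx.
  specialize (Myx ltac:(intros v u Hv Hu; rewrite Rabs_Ropp in Hu, Hv;
                        destruct (H u v Hu Hv) as [HS [_ [_ [HC _]]]]; auto)).
  cbv beta in Myx; rewrite !Rabs_Ropp in Myx.
  replace (y + - t) with (y - t) in Myx by ring; replace (x + - s) with (x - s) in Myx by ring.
  assert (Hst : 2 * (eps * Rabs s * Rabs t) <= eps * (s ^ 2 + t ^ 2)).
  { assert (Heps : 0 <= eps).
    { destruct (H x y Hx0 Hy0) as [_ [HA _]]; pose proof (Rabs_pos (fxx x y - A)); lra. }
    rewrite <- (pow2_abs s), <- (pow2_abs t).
    pose proof (pow2_ge_0 (Rabs s - Rabs t)); nra. }
  apply Rabs_le_inv in Sx; apply Rabs_le_inv in Sy;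
    apply Rabs_le_inv in Mxy; apply Rabs_le_inv in Myx.
  apply Rabs_le; lra.
Qed.

End SecondDifference.

Definition quad (al be ga x y : R) : R := al * x ^ 2 + be * x * y + ga * y ^ 2.

Lemma indefinite_quad_pos al be ga :
  be ^ 2 - 4 * al * ga > 0 -> exists u v, quad al be ga u v > 0.
Proof.
  intros H; destruct (Rtotal_order al 0) as [Hn | [-> | Hp]].
  - exists (- be), (2 * al); unfold quad.
    replace (al * (- be) ^ 2 + be * (- be) * (2 * al) + ga * (2 * al) ^ 2)
      with (- al * (be ^ 2 - 4 * al * ga)) by ring.
    apply Rmult_lt_0_compat; lra.
  - assert (be <> 0) by (intros ->; lra).
    exists ((1 - ga) / be), 1; unfold quad.
    replace (0 * ((1 - ga) / be) ^ 2 + be * ((1 - ga) / be) * 1 + ga * 1 ^ 2) with 1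
      by (field; assumption).
    lra.
  - exists 1, 0; unfold quad; lra.
Qed.

Lemma neg_abs_le_mult_of_abs_le_1 p e : Rabs e <= 1 -> - Rabs p <= p * e.
Proof.
  intros H; apply (Rabs_le_inv (p * e)).
  rewrite Rabs_mult; pose proof (Rabs_pos p); pose proof (Rabs_pos e); nra.
Qed.

(* Rounding the dilation (L u, L v) to a lattice point moves the value by O(L). *)
Lemma quad_dilate_perturb_ge al be ga u v L e g :
  1 <= L -> Rabs e <= 1 -> Rabs g <= 1 ->
  L * L * quad al be ga u v
    - L * (2 * Rabs al * Rabs u + Rabs be * (Rabs u + Rabs v) + 2 * Rabs ga * Rabs v
           + (Rabs al + Rabs be + Rabs ga))
  <= quad al be ga (L * u + e) (L * v + g).
Proof.
  intros HL He Hg.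
  replace (quad al be ga (L * u + e) (L * v + g)) with
    (L * L * quad al be ga u v
     + L * ((2 * al * u) * e + (be * u) * g + (be * v) * e + (2 * ga * v) * g)
     + ((al * e) * e + (be * e) * g + (ga * g) * g)) by (unfold quad; ring).
  assert (Hlin : - (2 * Rabs al * Rabs u + Rabs be * (Rabs u + Rabs v) + 2 * Rabs ga * Rabs v)
                 <= (2 * al * u) * e + (be * u) * g + (be * v) * e + (2 * ga * v) * g).
  { pose proof (neg_abs_le_mult_of_abs_le_1 (2 * al * u) e He).
    pose proof (neg_abs_le_mult_of_abs_le_1 (be * u) g Hg).
    pose proof (neg_abs_le_mult_of_abs_le_1 (be * v) e He).
    pose proof (neg_abs_le_mult_of_abs_le_1 (2 * ga * v) g Hg).
    rewrite !Rabs_mult, Rabs_right in * by lra; lra. }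
  assert (Hsq : - (Rabs al + Rabs be + Rabs ga) <= (al * e) * e + (be * e) * g + (ga * g) * g).
  { pose proof (neg_abs_le_mult_of_abs_le_1 (al * e) e He).
    pose proof (neg_abs_le_mult_of_abs_le_1 (be * e) g Hg).
    pose proof (neg_abs_le_mult_of_abs_le_1 (ga * g) g Hg).
    rewrite !Rabs_mult in *.
    pose proof (Rabs_pos al); pose proof (Rabs_pos be); pose proof (Rabs_pos ga); nra. }
  pose proof (Rabs_pos al); pose proof (Rabs_pos be); pose proof (Rabs_pos ga).
  pose proof (Rabs_pos u); pose proof (Rabs_pos v); nra.
Qed.

Lemma quad_pos_at_lattice_point al be ga :
  be ^ 2 - 4 * al * ga > 0 -> exists k l : Z, quad al be ga (IZR k) (IZR l) > 0.
Proof.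
  intros Hdisc; destruct (indefinite_quad_pos al be ga Hdisc) as [u [v HQ]].
  set (K := 2 * Rabs al * Rabs u + Rabs be * (Rabs u + Rabs v) + 2 * Rabs ga * Rabs v
            + (Rabs al + Rabs be + Rabs ga)).
  assert (HK : 0 <= K).
  { unfold K; pose proof (Rabs_pos al); pose proof (Rabs_pos be); pose proof (Rabs_pos ga);
      pose proof (Rabs_pos u); pose proof (Rabs_pos v); nra. }
  set (L := K / quad al be ga u v + 1).
  assert (HL : L * quad al be ga u v - K = quad al be ga u v) by (unfold L; field; lra).
  assert (HL1 : 1 <= L) by (unfold L; pose proof (Rle_mult_inv_pos K _ HK HQ); lra).
  exists (up (L * u)), (up (L * v)).
  destruct (archimed (L * u)) as [Hu1 Hu2]; destruct (archimed (L * v)) as [Hv1 Hv2].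
  pose proof (quad_dilate_perturb_ge al be ga u v L (IZR (up (L * u)) - L * u)
    (IZR (up (L * v)) - L * v) HL1 ltac:(apply Rabs_le; lra) ltac:(apply Rabs_le; lra)) as H.
  fold K in H; rewrite !Rplus_minus in H.
  replace (L * L * quad al be ga u v - L * K) with (L * quad al be ga u v) in H
    by (rewrite <- HL at 1; ring).
  nra.
Qed.

Lemma scaled_hessian_disc_pos a b A B C D : 0 < a -> 0 < b -> A * D - B * C < 0 ->
  ((B + C) * a * b) ^ 2 - 4 * (A * a ^ 2) * (D * b ^ 2) > 0.
Proof.
  intros Ha Hb Hdet.
  replace (((B + C) * a * b) ^ 2 - 4 * (A * a ^ 2) * (D * b ^ 2))
    with ((a * b) ^ 2 * ((B - C) ^ 2 - 4 * (A * D - B * C))) by ring.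
  apply Rmult_lt_0_compat; [apply pow_lt, Rmult_lt_0_compat; assumption |].
  pose proof (pow2_ge_0 (B - C)); lra.
Qed.

Lemma quad_neg_at_lattice_point al be ga :
  be ^ 2 - 4 * al * ga > 0 -> exists k l : Z, quad al be ga (IZR k) (IZR l) < 0.
Proof.
  intros H; destruct (quad_pos_at_lattice_point (- al) (- be) (- ga)) as [k [l Hkl]].
  - replace ((- be) ^ 2 - 4 * (- al) * (- ga)) with (be ^ 2 - 4 * al * ga) by ring; exact H.
  - exists k, l; unfold quad in *; lra.
Qed.

Definition open2 (E : R -> R -> Prop) : Prop :=
  forall x y, E x y -> exists d, 0 < d /\
    forall u v, Rabs (u - x) < d -> Rabs (v - y) < d -> E u v.

Lemma interiorD_open a b : open2 (interiorD a b).
Proof.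
  intros x y [[Hx1 Hx2] [Hy1 Hy2]].
  exists (Rmin (Rmin x (a - x)) (Rmin y (b - y))); split.
  - repeat apply Rmin_pos; lra.
  - intros u v Hu Hv; apply Rabs_def2 in Hu; apply Rabs_def2 in Hv.
    pose proof (Rmin_l (Rmin x (a - x)) (Rmin y (b - y))).
    pose proof (Rmin_r (Rmin x (a - x)) (Rmin y (b - y))).
    pose proof (Rmin_l x (a - x)); pose proof (Rmin_r x (a - x)).
    pose proof (Rmin_l y (b - y)); pose proof (Rmin_r y (b - y)).
    unfold interiorD; lra.
Qed.

Lemma partial_x_unique E (F G Fd Gd : R -> R -> R) : open2 E ->
  (forall x y, E x y -> F x y = G x y) ->
  (forall x y, E x y -> derivable_pt_lim (fun t => F t y) x (Fd x y)) ->
  (forall x y, E x y -> derivable_pt_lim (fun t => G t y) x (Gd x y)) ->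
  forall x y, E x y -> Fd x y = Gd x y.
Proof.
  intros HE Heq HF HG x y Hxy; destruct (HE x y Hxy) as [d [Hd Hball]].
  apply (uniqueness_limite (fun t => G t y) x); [| auto].
  apply (derivable_pt_lim_locally_ext (fun t => F t y) _ x (x - d) (x + d)); [lra | | auto].
  intros z Hz; apply Heq, Hball; [apply Rabs_def1 | rewrite Rminus_diag, Rabs_R0]; lra.
Qed.

Lemma partial_y_unique E (F G Fd Gd : R -> R -> R) : open2 E ->
  (forall x y, E x y -> F x y = G x y) ->
  (forall x y, E x y -> derivable_pt_lim (fun t => F x t) y (Fd x y)) ->
  (forall x y, E x y -> derivable_pt_lim (fun t => G x t) y (Gd x y)) ->
  forall x y, E x y -> Fd x y = Gd x y.
Proof.
  intros HE Heq HF HG x y Hxy; destruct (HE x y Hxy) as [d [Hd Hball]].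
  apply (uniqueness_limite (fun t => G x t) y); [| auto].
  apply (derivable_pt_lim_locally_ext (fun t => F x t) _ y (y - d) (y + d)); [lra | | auto].
  intros z Hz; apply Heq, Hball; [rewrite Rminus_diag, Rabs_R0 | apply Rabs_def1]; lra.
Qed.

Definition cont2_within (E : R -> R -> Prop) (g : R -> R -> R) (x y : R) : Prop :=
  forall eps, 0 < eps -> exists d, 0 < d /\
    forall u v, Rabs (u - x) < d -> Rabs (v - y) < d -> E u v ->
      Rabs (g u v - g x y) < eps.

Lemma cont2_within_of_eq E (g h : R -> R -> R) x y : E x y ->
  (forall u v, E u v -> g u v = h u v) -> cont2_at h x y -> cont2_within E g x y.
Proof.
  intros Hxy Heq Hh eps Heps; destruct (Hh eps Heps) as [d [Hd Hball]].
  exists d; split; [exact Hd |].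
  intros u v Hu Hv Huv; rewrite !Heq by assumption; auto.
Qed.

Lemma Ck_succ_weaken k E f : Ck (S k) E f -> Ck k E f.
Proof.
  revert f; induction k as [| k IH]; intros f Hf; [exact (proj1 Hf) |].
  destruct Hf as [Hc [fx [fy [Dx [Dy [Cx Cy]]]]]].
  split; [exact Hc |]; exists fx, fy; auto.
Qed.

(* Ck only asserts the existence of some partials; on an open set they agree with the given ones. *)
Lemma C2_second_partials_cont E (f fx fy fxx fxy fyx fyy : R -> R -> R) x0 y0 :
  open2 E -> Ck 2 E f -> E x0 y0 ->
  (forall x y, E x y -> derivable_pt_lim (fun t => f t y) x (fx x y)) ->
  (forall x y, E x y -> derivable_pt_lim (fun t => f x t) y (fy x y)) ->
  (forall x y, E x y -> derivable_pt_lim (fun t => fx t y) x (fxx x y)) ->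
  (forall x y, E x y -> derivable_pt_lim (fun t => fx x t) y (fxy x y)) ->
  (forall x y, E x y -> derivable_pt_lim (fun t => fy t y) x (fyx x y)) ->
  (forall x y, E x y -> derivable_pt_lim (fun t => fy x t) y (fyy x y)) ->
  cont2_within E fxx x0 y0 /\ cont2_within E fxy x0 y0 /\
  cont2_within E fyx x0 y0 /\ cont2_within E fyy x0 y0.
Proof.
  intros HE [_ [gx [gy [Dgx [Dgy [Cgx Cgy]]]]]] H0 Dx Dy Dxx Dxy Dyx Dyy.
  destruct Cgx as [_ [gxx [gxy [Dgxx [Dgxy [Cgxx Cgxy]]]]]].
  destruct Cgy as [_ [gyx [gyy [Dgyx [Dgyy [Cgyx Cgyy]]]]]].
  assert (Ex : forall x y, E x y -> fx x y = gx x y) by (apply (partial_x_unique E f f); auto).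
  assert (Ey : forall x y, E x y -> fy x y = gy x y) by (apply (partial_y_unique E f f); auto).
  split; [| split; [| split]].
  - apply (cont2_within_of_eq E fxx gxx); auto; apply (partial_x_unique E fx gx); auto.
  - apply (cont2_within_of_eq E fxy gxy); auto; apply (partial_y_unique E fx gx); auto.
  - apply (cont2_within_of_eq E fyx gyx); auto; apply (partial_x_unique E fy gy); auto.
  - apply (cont2_within_of_eq E fyy gyy); auto; apply (partial_y_unique E fy gy); auto.
Qed.

Lemma grid_index_shift a n i k : 0 < a -> (0 < n)%nat ->
  0 < INR i / INR n * a + IZR k * a / INR n < a ->
  exists l, (l <= n)%nat /\ INR l = INR i + IZR k.
Proof.
  intros Ha Hn H.
  assert (Hn' : 0 < INR n) by (apply lt_0_INR; lia).
  replace (INR i / INR n * a + IZR k * a / INR n) with ((INR i + IZR k) * a / INR n) in H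
    by (field; lra).
  assert (Hscale : (INR i + IZR k) * a = (INR i + IZR k) * a / INR n * INR n) by (field; lra).
  assert (Hrange : 0 < INR i + IZR k < INR n) by (split; nra).
  assert (Hz : IZR (Z.of_nat i + k) = INR i + IZR k) by (rewrite plus_IZR, <- INR_IZR_INZ; ring).
  assert (Hz0 : (0 <= Z.of_nat i + k)%Z) by (apply le_IZR; lra).
  exists (Z.to_nat (Z.of_nat i + k)).
  assert (Hl : INR (Z.to_nat (Z.of_nat i + k)) = INR i + IZR k)
    by (rewrite INR_IZR_INZ, Z2Nat.id by exact Hz0; exact Hz).
  split; [apply Nat.lt_le_incl, INR_lt; lra | exact Hl].
Qed.

Lemma in_grid_circle_shift n r i j l m k q : (l <= n)%nat -> (m <= n)%nat ->
  INR l = INR i + IZR k -> INR m = INR j + IZR q ->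
  Rabs (IZR k) <= r -> Rabs (IZR q) <= r -> in_grid_circle n r i j l m.
Proof.
  intros Hl Hm El Em Hk Hq; split; [exact Hl | split; [exact Hm |]].
  rewrite El, Em; replace (INR i + IZR k - INR i) with (IZR k) by ring.
  replace (INR j + IZR q - INR j) with (IZR q) by ring.
  apply Rmax_lub; assumption.
Qed.

Lemma eventually_abs_div_lt c d : 0 < d ->
  exists N, forall n, (N <= n)%nat -> Rabs (c / INR n) < d.
Proof.
  intros Hd; assert (Hc : 0 < Rabs c + 1) by (pose proof (Rabs_pos c); lra).
  destruct (archimed_cor1 (d / (Rabs c + 1))) as [N [HN HN0]];
    [apply Rdiv_lt_0_compat; lra |].
  exists N; intros n Hn.
  assert (HN' : 0 < INR N) by (apply lt_0_INR; exact HN0).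
  assert (Hinv : / INR n <= / INR N) by (apply Rinv_le_contravar, le_INR; assumption).
  assert (Hn' : 0 < / INR n) by (apply Rinv_0_lt_compat, lt_0_INR; lia).
  unfold Rdiv; rewrite Rabs_mult, (Rabs_right (/ INR n)) by lra.
  apply (Rmult_lt_compat_l (Rabs c + 1)) in HN; [| exact Hc].
  replace ((Rabs c + 1) * (d / (Rabs c + 1))) with d in HN by (field; lra).
  pose proof (Rabs_pos c); nra.
Qed.

Lemma mul_pos_of_close q c e x : 0 < c -> e < Rabs q ->
  Rabs (x - q / c) <= e / c -> 0 < q * x.
Proof.
  intros Hc He H.
  assert (Hcx : Rabs (c * x - q) <= e).
  { replace (c * x - q) with (c * (x - q / c)) by (field; lra).
    rewrite Rabs_mult, (Rabs_right c) by lra.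
    apply (Rmult_le_compat_l c) in H; [| lra].
    replace (c * (e / c)) with e in H by (field; lra); exact H. }
  apply Rabs_le_inv in Hcx; revert He; unfold Rabs; destruct (Rcase_abs q); intros; nra.
Qed.

Lemma not_grid_maximal_of_second_diff_pos a b f n r i j l1 m1 l2 m2 :
  in_grid_circle n r i j l1 m1 -> in_grid_circle n r i j l2 m2 ->
  0 < f (gridx a n l1) (gridy b n m1) + f (gridx a n l2) (gridy b n m2)
      - 2 * f (gridx a n i) (gridy b n j) ->
  ~ grid_maximal a b f n r i j.
Proof.
  intros C1 C2 Hpos Hmax; pose proof (Hmax _ _ C1); pose proof (Hmax _ _ C2); lra.
Qed.

Lemma not_grid_minimal_of_second_diff_neg a b f n r i j l1 m1 l2 m2 :
  in_grid_circle n r i j l1 m1 -> in_grid_circle n r i j l2 m2 ->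
  f (gridx a n l1) (gridy b n m1) + f (gridx a n l2) (gridy b n m2)
    - 2 * f (gridx a n i) (gridy b n j) < 0 ->
  ~ grid_minimal a b f n r i j.
Proof.
  intros C1 C2 Hneg Hmin; pose proof (Hmin _ _ C1); pose proof (Hmin _ _ C2); lra.
Qed.

Section SaddleGrid.

Variables (a b : R) (f fx fy fxx fxy fyx fyy : R -> R -> R).
Hypotheses (Ha : 0 < a) (Hb : 0 < b).
Hypothesis Dx : forall x y, interiorD a b x y -> derivable_pt_lim (fun t => f t y) x (fx x y).
Hypothesis Dy : forall x y, interiorD a b x y -> derivable_pt_lim (fun t => f x t) y (fy x y).
Hypothesis Dxx : forall x y, interiorD a b x y -> derivable_pt_lim (fun t => fx t y) x (fxx x y).
Hypothesis Dxy : forall x y, interiorD a b x y -> derivable_pt_lim (fun t => fx x t) y (fxy x y).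
Hypothesis Dyx : forall x y, interiorD a b x y -> derivable_pt_lim (fun t => fy t y) x (fyx x y).
Hypothesis Dyy : forall x y, interiorD a b x y -> derivable_pt_lim (fun t => fy x t) y (fyy x y).

Lemma grid_second_diff_estimate A B C D eps n i j kx ky r :
  (0 < n)%nat -> Rabs (IZR kx) <= r -> Rabs (IZR ky) <= r ->
  (forall u v, Rabs (u - gridx a n i) <= Rabs (IZR kx * a / INR n) ->
     Rabs (v - gridy b n j) <= Rabs (IZR ky * b / INR n) ->
     hessian_near (interiorD a b) fxx fxy fyx fyy A B C D eps u v) ->
  exists l1 m1 l2 m2, in_grid_circle n r i j l1 m1 /\ in_grid_circle n r i j l2 m2 /\
    Rabs (f (gridx a n l1) (gridy b n m1) + f (gridx a n l2) (gridy b n m2)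
          - 2 * f (gridx a n i) (gridy b n j)
          - quad (A * a ^ 2) ((B + C) * a * b) (D * b ^ 2) (IZR kx) (IZR ky) / INR n ^ 2)
    <= 3 * eps * (IZR kx ^ 2 * a ^ 2 + IZR ky ^ 2 * b ^ 2) / INR n ^ 2.
Proof.
  intros Hn Hk Hl Hbox.
  assert (Hn' : 0 < INR n) by (apply lt_0_INR; lia).
  set (x := gridx a n i) in *; set (y := gridy b n j) in *.
  set (s := IZR kx * a / INR n) in *; set (t := IZR ky * b / INR n) in *.
  pose proof (second_diff_bound _ f fx fy fxx fxy fyx fyy Dx Dy Dxx Dxy Dyx Dyy
                A B C D eps x y s t Hbox) as Hsd.
  assert (Hplus : Rabs (x + s - x) <= Rabs s /\ Rabs (y + t - y) <= Rabs t).
  { replace (x + s - x) with s by ring; replace (y + t - y) with t by ring; lra. }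
  assert (Hminus : Rabs (x - s - x) <= Rabs s /\ Rabs (y - t - y) <= Rabs t).
  { replace (x - s - x) with (- s) by ring; replace (y - t - y) with (- t) by ring.
    rewrite !Rabs_Ropp; lra. }
  destruct (Hbox _ _ (proj1 Hplus) (proj2 Hplus)) as [[Ip1 Ip2] _].
  destruct (Hbox _ _ (proj1 Hminus) (proj2 Hminus)) as [[Im1 Im2] _].
  assert (Ex : x - s = INR i / INR n * a + IZR (- kx) * a / INR n)
    by (rewrite opp_IZR; unfold x, s, gridx; field; lra).
  assert (Ey : y - t = INR j / INR n * b + IZR (- ky) * b / INR n)
    by (rewrite opp_IZR; unfold y, t, gridy; field; lra).
  destruct (grid_index_shift a n i kx Ha Hn Ip1) as [l1 [Hl1 El1]].
  destruct (grid_index_shift b n j ky Hb Hn Ip2) as [m1 [Hm1 Em1]].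
  destruct (grid_index_shift a n i (- kx) Ha Hn ltac:(rewrite <- Ex; exact Im1)) as [l2 [Hl2 El2]].
  destruct (grid_index_shift b n j (- ky) Hb Hn ltac:(rewrite <- Ey; exact Im2)) as [m2 [Hm2 Em2]].
  exists l1, m1, l2, m2; split; [| split].
  - apply (in_grid_circle_shift n r i j l1 m1 kx ky); assumption.
  - apply (in_grid_circle_shift n r i j l2 m2 (- kx) (- ky)); try assumption;
      rewrite opp_IZR, Rabs_Ropp; assumption.
  - rewrite opp_IZR in El2, Em2.
    replace (gridx a n l1) with (x + s) by (unfold x, s, gridx; rewrite El1; field; lra).
    replace (gridy b n m1) with (y + t) by (unfold y, t, gridy; rewrite Em1; field; lra).
    replace (gridx a n l2) with (x - s) by (unfold x, s, gridx; rewrite El2; field; lra).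
    replace (gridy b n m2) with (y - t) by (unfold y, t, gridy; rewrite Em2; field; lra).
    replace (quad (A * a ^ 2) ((B + C) * a * b) (D * b ^ 2) (IZR kx) (IZR ky) / INR n ^ 2)
      with (A * s ^ 2 + (B + C) * s * t + D * t ^ 2) by (unfold quad, s, t; field; lra).
    replace (3 * eps * (IZR kx ^ 2 * a ^ 2 + IZR ky ^ 2 * b ^ 2) / INR n ^ 2)
      with (3 * eps * (s ^ 2 + t ^ 2)) by (unfold s, t; field; lra).
    exact Hsd.
Qed.

Variables p1 p2 : R.
Hypothesis Hp : interiorD a b p1 p2.
Hypothesis Cxx : cont2_within (interiorD a b) fxx p1 p2.
Hypothesis Cxy : cont2_within (interiorD a b) fxy p1 p2.
Hypothesis Cyx : cont2_within (interiorD a b) fyx p1 p2.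
Hypothesis Cyy : cont2_within (interiorD a b) fyy p1 p2.

Lemma hessian_near_at_saddle eps : 0 < eps -> exists d, 0 < d /\
  forall u v, Rabs (u - p1) < d -> Rabs (v - p2) < d ->
    hessian_near (interiorD a b) fxx fxy fyx fyy
      (fxx p1 p2) (fxy p1 p2) (fyx p1 p2) (fyy p1 p2) eps u v.
Proof.
  intros Heps.
  destruct (interiorD_open a b p1 p2 Hp) as [d0 [Hd0 Hball]].
  destruct (Cxx eps Heps) as [d1 [Hd1 H1]]; destruct (Cxy eps Heps) as [d2 [Hd2 H2]].
  destruct (Cyx eps Heps) as [d3 [Hd3 H3]]; destruct (Cyy eps Heps) as [d4 [Hd4 H4]].
  exists (Rmin d0 (Rmin (Rmin d1 d2) (Rmin d3 d4))); split; [repeat apply Rmin_pos; assumption |].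
  intros u v Hu Hv.
  repeat match goal with
         | H : _ < Rmin _ _ |- _ => apply Rmin_Rgt in H; destruct H
         | H : Rmin _ _ > _ |- _ => apply Rmin_Rgt in H; destruct H
         end.
  assert (Huv : interiorD a b u v) by auto.
  split; [exact Huv |]; repeat split; left; auto.
Qed.

Lemma grid_second_diff_sign kx ky :
  quad (fxx p1 p2 * a ^ 2) ((fxy p1 p2 + fyx p1 p2) * a * b) (fyy p1 p2 * b ^ 2)
    (IZR kx) (IZR ky) <> 0 ->
  exists d N, 0 < d /\ forall n i j r, (N <= n)%nat -> (0 < n)%nat ->
    Rabs (gridx a n i - p1) < d -> Rabs (gridy b n j - p2) < d ->
    Rabs (IZR kx) <= r -> Rabs (IZR ky) <= r ->
    exists l1 m1 l2 m2, in_grid_circle n r i j l1 m1 /\ in_grid_circle n r i j l2 m2 /\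
      0 < quad (fxx p1 p2 * a ^ 2) ((fxy p1 p2 + fyx p1 p2) * a * b) (fyy p1 p2 * b ^ 2)
            (IZR kx) (IZR ky)
          * (f (gridx a n l1) (gridy b n m1) + f (gridx a n l2) (gridy b n m2)
             - 2 * f (gridx a n i) (gridy b n j)).
Proof.
  set (Q := quad _ _ _ (IZR kx) (IZR ky)); intros HQ.
  set (X := IZR kx ^ 2 * a ^ 2 + IZR ky ^ 2 * b ^ 2).
  assert (HX : 0 <= X) by (unfold X; nra).
  set (eps := Rabs Q / (4 * (1 + X))).
  assert (Heps : 0 < eps) by (apply Rdiv_lt_0_compat; [apply Rabs_pos_lt | ]; lra).
  assert (Hsmall : 3 * eps * X < Rabs Q).
  { assert (eps * (4 * (1 + X)) = Rabs Q) by (unfold eps; field; lra); nra. }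
  destruct (hessian_near_at_saddle eps Heps) as [d [Hd Hnear]].
  destruct (eventually_abs_div_lt (IZR kx * a) (d / 2)) as [Nx HNx]; [lra |].
  destruct (eventually_abs_div_lt (IZR ky * b) (d / 2)) as [Ny HNy]; [lra |].
  exists (d / 2), (Nat.max Nx Ny); split; [lra |].
  intros n i j r HN Hn Hx Hy Hk Hl.
  specialize (HNx n ltac:(lia)); specialize (HNy n ltac:(lia)).
  destruct (grid_second_diff_estimate (fxx p1 p2) (fxy p1 p2) (fyx p1 p2) (fyy p1 p2) eps
              n i j kx ky r Hn Hk Hl) as [l1 [m1 [l2 [m2 [C1 [C2 Hest]]]]]].
  { intros u v Hu Hv; apply Hnear.
    - replace (u - p1) with ((u - gridx a n i) + (gridx a n i - p1)) by ring.
      eapply Rle_lt_trans; [apply Rabs_triang | lra].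
    - replace (v - p2) with ((v - gridy b n j) + (gridy b n j - p2)) by ring.
      eapply Rle_lt_trans; [apply Rabs_triang | lra]. }
  exists l1, m1, l2, m2; split; [exact C1 | split; [exact C2 |]].
  apply (mul_pos_of_close Q (INR n ^ 2) (3 * eps * X)); [| exact Hsmall | exact Hest].
  apply pow_lt, lt_0_INR; lia.
Qed.

End SaddleGrid.

Theorem theorem1 (a b : R) (f : R -> R -> R) (p1 p2 : R)
  (fx fy fxx fxy fyx fyy : R -> R -> R) :
  0 < a -> 0 < b ->
  Ck 3 (interiorD a b) f ->
  interiorD a b p1 p2 ->
  (forall x y, interiorD a b x y -> derivable_pt_lim (fun t => f t y) x (fx x y)) ->
  (forall x y, interiorD a b x y -> derivable_pt_lim (fun t => f x t) y (fy x y)) ->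
  (forall x y, interiorD a b x y -> derivable_pt_lim (fun t => fx t y) x (fxx x y)) ->
  (forall x y, interiorD a b x y -> derivable_pt_lim (fun t => fx x t) y (fxy x y)) ->
  (forall x y, interiorD a b x y -> derivable_pt_lim (fun t => fy t y) x (fyx x y)) ->
  (forall x y, interiorD a b x y -> derivable_pt_lim (fun t => fy x t) y (fyy x y)) ->
  fx p1 p2 = 0 -> fy p1 p2 = 0 ->
  fxx p1 p2 * fyy p1 p2 - fxy p1 p2 * fyx p1 p2 < 0 ->
  exists (U : R -> R -> Prop) (r : R),
    nbhd U p1 p2 /\ 0 < r /\
    exists N : nat, forall n : nat, (N <= n)%nat -> (1 <= n)%nat ->
      forall i j : nat, (i <= n)%nat -> (j <= n)%nat ->
        U (gridx a n i) (gridy b n j) ->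
        ~ grid_minimal a b f n r i j /\ ~ grid_maximal a b f n r i j.
Proof.
  intros Ha Hb HC Hp Dx Dy Dxx Dxy Dyx Dyy _ _ Hdet.
  destruct (C2_second_partials_cont _ f fx fy fxx fxy fyx fyy p1 p2 (interiorD_open a b)
              (Ck_succ_weaken 2 _ f HC) Hp Dx Dy Dxx Dxy Dyx Dyy) as [Cxx [Cxy [Cyx Cyy]]].
  pose proof (scaled_hessian_disc_pos a b (fxx p1 p2) (fxy p1 p2) (fyx p1 p2) (fyy p1 p2)
                Ha Hb Hdet) as Hdisc.
  destruct (quad_pos_at_lattice_point _ _ _ Hdisc) as [k1 [l1 HQ1]].
  destruct (quad_neg_at_lattice_point _ _ _ Hdisc) as [k2 [l2 HQ2]].
  destruct (grid_second_diff_sign a b f fx fy fxx fxy fyx fyy Ha Hb Dx Dy Dxx Dxy Dyx Dyy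
              p1 p2 Hp Cxx Cxy Cyx Cyy k1 l1 ltac:(lra)) as [d1 [N1 [Hd1 Hmax]]].
  destruct (grid_second_diff_sign a b f fx fy fxx fxy fyx fyy Ha Hb Dx Dy Dxx Dxy Dyx Dyy
              p1 p2 Hp Cxx Cxy Cyx Cyy k2 l2 ltac:(lra)) as [d2 [N2 [Hd2 Hmin]]].
  set (r := 1 + Rabs (IZR k1) + Rabs (IZR l1) + Rabs (IZR k2) + Rabs (IZR l2)).
  pose proof (Rabs_pos (IZR k1)); pose proof (Rabs_pos (IZR l1)).
  pose proof (Rabs_pos (IZR k2)); pose proof (Rabs_pos (IZR l2)).
  set (d := Rmin d1 d2).
  exists (fun x y => Rabs (x - p1) < d /\ Rabs (y - p2) < d), r.
  split; [exists d; split; [apply Rmin_pos |]; auto |].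
  split; [unfold r; lra |].
  exists (Nat.max N1 N2); intros n HN Hn i j _ _ [Hx Hy].
  apply Rmin_Rgt in Hx as [Hx1 Hx2]; apply Rmin_Rgt in Hy as [Hy1 Hy2].
  split.
  - destruct (Hmin n i j r ltac:(lia) Hn Hx2 Hy2 ltac:(unfold r; lra) ltac:(unfold r; lra))
      as [l [m [l' [m' [C [C' Hsign]]]]]].
    apply (not_grid_minimal_of_second_diff_neg a b f n r i j l m l' m' C C'); nra.
  - destruct (Hmax n i j r ltac:(lia) Hn Hx1 Hy1 ltac:(unfold r; lra) ltac:(unfold r; lra))
      as [l [m [l' [m' [C [C' Hsign]]]]]].
    apply (not_grid_maximal_of_second_diff_pos a b f n r i j l m l' m' C C'); nra.
Qed.
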